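(* For every tournament $T$, $\Delta(T)\le |F|$, where $F$ is a minimum feedback arc set of $T$.
   Context: A tournament is a digraph with exactly one arc between each pair of distinct vertices. A feedback arc set is a set of arcs whose removal makes the digraph acyclic. For an ordering $\sigma$ of $V(T)$, an arc $(x,y)$ is backward if $y$ precedes $x$; $d_\sigma(v)$ is the number of backward arcs incident to $v$, $\Delta_\sigma(T)=\max_v d_\sigma(v)$, and the degreewidth is $\Delta(T)=\min_\sigma\Delta_\sigma(T)$. *)

From mathcomp Require Import all_boot.
Set Implicit Arguments. Unset Strict Implicit. Unset Printing Implicit Defensive.

Definition tournament (V : finType) (arc : rel V) : Prop :=
  (forall x, ~~ arc x x) /\
  (forall x y, x != y -> (arc x y && ~~ arc y x) || (arc y x && ~~ arc x y)).

Definition acyclic (V : finType) (e : rel V) : Prop :=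
  forall x y, e x y -> ~~ connect e y x.

Definition remove_arcs (V : finType) (arc : rel V) (F : {set V * V}) : rel V :=
  fun x y => arc x y && ((x, y) \notin F).

Definition feedback_arc_set (V : finType) (arc : rel V) (F : {set V * V}) : Prop :=
  (forall p, p \in F -> arc p.1 p.2) /\ acyclic (remove_arcs arc F).

Definition min_feedback_arc_set (V : finType) (arc : rel V) (F : {set V * V}) : Prop :=
  feedback_arc_set arc F /\
  (forall F' : {set V * V}, feedback_arc_set arc F' -> #|F| <= #|F'|).

(* An ordering of V: a bijection sigma : V -> 'I_#|V| (position of each vertex). *)
Definition ordering (V : finType) (sigma : V -> 'I_#|V|) : Prop := bijective sigma.

Definition backward (V : finType) (arc : rel V) (sigma : V -> 'I_#|V|) (x y : V) : bool :=
  arc x y && (sigma y < sigma x).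

Definition back_deg (V : finType) (arc : rel V) (sigma : V -> 'I_#|V|) (v : V) : nat :=
  #|[set p : V * V | backward arc sigma p.1 p.2 && ((p.1 == v) || (p.2 == v))]|.

Definition Delta_sigma (V : finType) (arc : rel V) (sigma : V -> 'I_#|V|) : nat :=
  \max_(v : V) back_deg arc sigma v.

(* Orderings are enumerated as injective finite functions V -> 'I_#|V| (= bijections).
   The neutral element #|V * V| of minn is an upper bound on every Delta_sigma (each
   back_deg counts a subset of V * V), and the range is nonempty, so it never matters. *)
Definition degreewidth (V : finType) (arc : rel V) : nat :=
  \big[minn/#|{: V * V}|]_(s : {ffun V -> 'I_#|V|} | injectiveb s) Delta_sigma arc s.

From mathcomp Require Import all_boot all_order.

Set Implicit Arguments.
Unset Strict Implicit.
Unset Printing Implicit Defensive.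

Import Order.TTheory.

(* Any feedback arc set F will do: order the vertices topologically with respect to the
   acyclic digraph T - F.  Then every backward arc lies in F, so no vertex is
   incident to more than |F| backward arcs. *)

Lemma degreewidth_le_Delta_sigma (V : finType) (arc : rel V)
    (sigma : {ffun V -> 'I_#|V|}) :
  injectiveb sigma -> degreewidth arc <= Delta_sigma arc sigma.
Proof.
move=> sigma_inj; rewrite /degreewidth -leEnat -minEnat.
exact: (bigmin_le_cond _ _ sigma_inj).
Qed.

Lemma Delta_sigma_le_card (V : finType) (arc : rel V) (sigma : V -> 'I_#|V|)
    (F : {set V * V}) :
  (forall x y, backward arc sigma x y -> (x, y) \in F) ->
  Delta_sigma arc sigma <= #|F|.
Proof.
move=> backF; apply/bigmax_leqP => v _; apply/subset_leq_card/subsetP.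
by move=> [x y]; rewrite inE => /andP[/backF].
Qed.

Lemma ordering_of_rank (V : finType) (f : V -> nat) :
  exists2 sigma : {ffun V -> 'I_#|V|},
    injectiveb sigma & forall x y, f x < f y -> sigma x < sigma y.
Proof.
pose leT := [rel a b | f a <= f b].
have leT_trans : transitive leT by move=> b a c; apply: leq_trans.
pose s := sort leT (enum V).
have s_all x : x \in s by rewrite mem_sort mem_enum.
have s_sorted : sorted leT s by apply: sort_sorted => a b; apply: leq_total.
have index_lt x : index x s < #|V| by rewrite cardE -(size_sort leT) index_mem.
exists [ffun x => Ordinal (index_lt x)].
  by apply/injectiveP => x y; rewrite !ffunE => -[/index_inj]; apply.
move=> x y; rewrite !ffunE /= !ltnNge; apply: contra => le_yx.
exact: (sorted_leq_index leT_trans (fun a => leqnn (f a)) s_sorted).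
Qed.

Definition ancestors (V : finType) (e : rel V) (x : V) : {set V} :=
  [set z | connect e z x].

Lemma acyclic_ancestors_proper (V : finType) (e : rel V) (x y : V) :
  acyclic e -> e x y -> ancestors e x \proper ancestors e y.
Proof.
move=> e_acyclic exy; apply/properP; split.
  by apply/subsetP => z; rewrite !inE => /connect_trans; apply; apply: connect1.
by exists y; rewrite inE ?connect0 ?e_acyclic.
Qed.

Lemma acyclic_topological_ordering (V : finType) (e : rel V) :
  acyclic e -> exists2 sigma : {ffun V -> 'I_#|V|},
    injectiveb sigma & forall x y, e x y -> sigma x < sigma y.
Proof.
move=> e_acyclic.
have [sigma sigma_inj sigma_mono] := ordering_of_rank (fun x => #|ancestors e x|).
exists sigma => // x y exy; apply/sigma_mono/proper_card.
exact: acyclic_ancestors_proper.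
Qed.

Lemma backward_mem_removed_arcs (V : finType) (arc : rel V) (F : {set V * V})
    (sigma : V -> 'I_#|V|) (x y : V) :
  (forall u v, remove_arcs arc F u v -> sigma u < sigma v) ->
  backward arc sigma x y -> (x, y) \in F.
Proof.
move=> sigma_sorted /andP[arc_xy lt_yx]; apply/negPn/negP => xyNF.
have := sigma_sorted x y; rewrite /remove_arcs arc_xy xyNF => /(_ isT).
by rewrite ltnNge (ltnW lt_yx).
Qed.

Theorem mainTheorem19 (V : finType) (arc : rel V) (F : {set V * V}) :
  tournament arc -> min_feedback_arc_set arc F ->
  degreewidth arc <= #|F|.
Proof.
move=> _ [[_ F_acyclic] _].
have [sigma sigma_inj sigma_sorted] := acyclic_topological_ordering F_acyclic.
apply: leq_trans (degreewidth_le_Delta_sigma arc sigma_inj) _.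
apply: Delta_sigma_le_card => x y.
exact: backward_mem_removed_arcs.
Qed.
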